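(* For integers $1\le r<n$, $$\mathrm{LE}(n)\cap\left(\frac{n!}{r+1},\,n!\right]=\left\{\frac{n!}{r!}\,\ell:\ \ell\in \mathrm{LE}(r)\cap\left(\frac{r!}{r+1},\,r!\right]\right\}.$$
   Context: All posets are finite. For a finite poset $P$, $\mathrm{ext}(P)$ denotes the number of linear extensions of $P$. For a positive integer $n$, $\mathrm{LE}(n)=\{\mathrm{ext}(P): P \text{ a poset with } |P|=n\}$. *)

From mathcomp Require Import all_boot all_fingroup.
Set Implicit Arguments. Unset Strict Implicit. Unset Printing Implicit Defensive.

(* A (finite) poset with n elements, up to isomorphism, is a partial order
   (reflexive, antisymmetric, transitive relation) on 'I_n. *)
Definition is_poset (n : nat) (R : rel 'I_n) : Prop :=
  reflexive R /\ antisymmetric R /\ transitive R.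

(* A linear extension of R is an order-preserving bijection s from the poset
   onto the chain 0 < 1 < ... < n-1 (s x = position of x). *)
Definition is_linext (n : nat) (R : rel 'I_n) (s : {perm 'I_n}) : bool :=
  [forall x, forall y, R x y ==> (s x <= s y)].

Definition ext (n : nat) (R : rel 'I_n) : nat :=
  #|[set s : {perm 'I_n} | is_linext R s]|.

Definition LE (n m : nat) : Prop :=
  exists R : rel 'I_n, is_poset R /\ ext R = m.

From mathcomp Require Import all_boot all_fingroup.
Set Implicit Arguments. Unset Strict Implicit. Unset Printing Implicit Defensive.

(* Posets with many linear extensions (ext P > n!/(r+1)) are exactly the
   r-element posets with more than r!/(r+1) extensions, padded by n - r
   isolated points.

   Classifying the permutations by the position of one
      element gives ext R = n * ext (R - i) when i is isolated, and classifying
      them by the element placed last gives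
      ext R = sum of ext (R - i) over the maximal elements i.
   2. Key bound (ext_bound): if k elements of R are non-isolated then
      ext R * max(k, 1) <= n!, for every relation R.  By induction with the
      second formula: each isolated maximal element contributes at most
      (n-1)!/k, and the non-isolated maximal elements contribute at most
      (n-1)! in total, since deleting one of t >= 2 of them still leaves at
      least t non-isolated elements.
   3. Consequently ext P > n!/(r+1) forces at most r non-isolated elements, so
      deleting n - r isolated points leaves an r-element poset Q with
      ext P = n!/r! * ext Q.  Conversely, adding isolated points multiplies the
      number of extensions by n!/r!. *)

Section LiftPerm.
Variables (n : nat) (i j : 'I_n.+1).

Lemma lift_perm_inj : injective (lift_perm i j : 'S_n -> 'S_n.+1).
Proof.
move=> s t Est; apply/permP => k; apply: (@lift_inj _ j).
by rewrite -!(lift_perm_lift i) Est.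
Qed.

Lemma lift_perm_onto (s : 'S_n.+1) : s i = j -> exists t : 'S_n, s = lift_perm i j t.
Proof.
move=> sij; pose f k := odflt k (unlift j (s (lift i k))).
have fK k : lift j (f k) = s (lift i k).
  have : j != s (lift i k) by rewrite -sij (inj_eq perm_inj) neq_lift.
  by rewrite /f => /unlift_some[k' Es ->] /=; rewrite Es.
have f_inj : injective f.
  by move=> k1 k2 /(congr1 (lift j)); rewrite !fK => /perm_inj /lift_inj.
exists (perm f_inj); apply/permP => k.
by case: (unliftP i k) => [k'|] ->; rewrite ?lift_perm_id ?lift_perm_lift ?permE ?fK.
Qed.

Lemma sum_perm_by_value (F : 'S_n.+1 -> nat) :
  \sum_(s : 'S_n.+1 | s i == j) F s = \sum_(t : 'S_n) F (lift_perm i j t).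
Proof.
rewrite -[RHS](big_imset _ (in2W lift_perm_inj)) /=; apply: eq_bigl => s.
apply/eqP/imsetP => [/lift_perm_onto[t ->] | [t _ ->]]; last exact: lift_perm_id.
by exists t.
Qed.

End LiftPerm.

Definition delete n (R : rel 'I_n.+1) (i : 'I_n.+1) : rel 'I_n :=
  fun x y => R (lift i x) (lift i y).

Definition comparable n (R : rel 'I_n) (x y : 'I_n) : bool := R x y || R y x.

Definition nonisolated n (R : rel 'I_n) : {set 'I_n} :=
  [set x | [exists y, (y != x) && comparable R x y]].

Definition is_maximal n (R : rel 'I_n) (x : 'I_n) : bool :=
  [forall z, R x z ==> (z == x)].

Definition nonisolated_maximal n (R : rel 'I_n) : {set 'I_n} :=
  [set x in nonisolated R | is_maximal R x].

Lemma in_nonisolated_maximal n (R : rel 'I_n) x :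
  (x \in nonisolated_maximal R) = (x \in nonisolated R) && is_maximal R x.
Proof. by rewrite !inE. Qed.

Lemma isolatedP n (R : rel 'I_n) i z :
  i \notin nonisolated R -> z != i -> ~~ R i z && ~~ R z i.
Proof.
move=> iso zi; rewrite -negb_or; apply: contra iso => Riz.
by rewrite inE; apply/existsP; exists z; rewrite zi.
Qed.

Lemma maximalP n (R : rel 'I_n) x z : is_maximal R x -> R x z -> z = x.
Proof. by move=> /forallP /(_ z) /implyP Hx /Hx /eqP. Qed.

Lemma ext_sum n (R : rel 'I_n) : ext R = \sum_(s : 'S_n) is_linext R s.
Proof. by rewrite /ext -sum1dep_card big_mkcond; apply: eq_bigr => s _; case: ifP. Qed.

Lemma ext_le_fact n (R : rel 'I_n) : ext R <= n`!.
Proof. by rewrite /ext -card_Sn; apply: max_card. Qed.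

Lemma ext_eq n (R1 R2 : rel 'I_n) : R1 =2 R2 -> ext R1 = ext R2.
Proof.
move=> E; rewrite /ext; apply: eq_card => s; rewrite !inE /is_linext.
by apply: eq_forallb => x; apply: eq_forallb => y; rewrite E.
Qed.

Lemma delete_poset n (R : rel 'I_n.+1) i : is_poset R -> is_poset (delete R i).
Proof.
move=> [Rrefl [Ranti Rtrans]]; split; [|split].
- by move=> x; apply: Rrefl.
- by move=> x y /Ranti /lift_inj.
- by move=> x y z; apply: Rtrans.
Qed.

Section LinextLift.
Variables (n : nat) (R : rel 'I_n.+1) (i : 'I_n.+1) (s : 'S_n).

Lemma linext_delete j : is_linext R (lift_perm i j s) -> is_linext (delete R i) s.
Proof.
move=> /forallP ext_s; apply/forallP => x; apply/forallP => y; apply/implyP => Rxy.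
by have := implyP (forallP (ext_s (lift i x)) (lift i y)) Rxy; rewrite !lift_perm_lift /= leq_bump2.
Qed.

Lemma linext_lift_perm j :
  is_linext (delete R i) s -> (forall y, R i y -> lift_perm i j s i <= lift_perm i j s y) ->
  (forall x, R x i -> lift_perm i j s x <= lift_perm i j s i) -> is_linext R (lift_perm i j s).
Proof.
move=> ext_s from_i to_i; apply/forallP => x; apply/forallP => y; apply/implyP => Rxy.
case: (unliftP i x) => [x'|] Ex; case: (unliftP i y) => [y'|] Ey; subst x y => //.
- by rewrite !lift_perm_lift /= leq_bump2; apply: (implyP (forallP (forallP ext_s x') y')).
- exact: to_i.
- exact: from_i.
Qed.

Lemma linext_delete_isolated j :
  i \notin nonisolated R -> is_linext R (lift_perm i j s) = is_linext (delete R i) s.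
Proof.
move=> iso; apply/idP/idP => [|ext_s]; first exact: linext_delete.
apply: linext_lift_perm => // z Rz; have [->//|zi] := eqVneq z i.
  by move: (isolatedP iso zi); rewrite Rz.
by move: (isolatedP iso zi); rewrite Rz andbF.
Qed.

Lemma linext_delete_top :
  is_linext R (lift_perm i ord_max s) = is_maximal R i && is_linext (delete R i) s.
Proof.
apply/idP/andP => [ext_s | [max_i ext_s]].
  split; last exact: (linext_delete ext_s).
  apply/forallP => z; apply/implyP => Riz.
  case: (unliftP i z) => [z'|] Ez; subst z => //.
  move: (implyP (forallP (forallP ext_s i) (lift i z')) Riz).
  by rewrite lift_perm_id lift_perm_lift lift_max /= leqNgt ltn_ord.
apply: linext_lift_perm => // z Rz; last by rewrite lift_perm_id -ltnS.
by rewrite (maximalP max_i Rz).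
Qed.

End LinextLift.

(* First deletion formula: classify by the position of the isolated i. *)
Lemma ext_delete_isolated n (R : rel 'I_n.+1) i :
  i \notin nonisolated R -> ext R = n.+1 * ext (delete R i).
Proof.
move=> iso; rewrite ext_sum (partition_big (fun s : 'S_n.+1 => s i) predT) //=.
rewrite (eq_bigr (fun _ => ext (delete R i))) ?sum_nat_const ?card_ord // => j _.
by rewrite sum_perm_by_value ext_sum; apply: eq_bigr => s _; rewrite linext_delete_isolated.
Qed.

(* Second deletion formula: classify by the element placed last. *)
Lemma ext_delete_maximal n (R : rel 'I_n.+1) :
  ext R = \sum_i is_maximal R i * ext (delete R i).
Proof.
rewrite ext_sum (partition_big (fun s : 'S_n.+1 => s^-1%g ord_max) predT) //=.
apply: eq_bigr => i _.
rewrite (eq_bigl (fun s : 'S_n.+1 => s i == ord_max)); last first.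
  by move=> s /=; rewrite -(inj_eq (@perm_inj _ s)) permKV eq_sym.
rewrite sum_perm_by_value ext_sum big_distrr /=; apply: eq_bigr => s _.
by rewrite linext_delete_top; case: (is_maximal R i); case: (is_linext _ _).
Qed.

Section DeleteNonisolated.
Variables (n : nat) (R : rel 'I_n.+1) (i : 'I_n.+1).

Lemma lift_mem_nonisolated z w :
  z != i -> w != i -> w != z -> comparable R z w ->
  z \in [set lift i x | x in nonisolated (delete R i)].
Proof.
move=> zi wi wz Rzw.
case: (unliftP i z) => [z'|] Ez; last by rewrite Ez eqxx in zi.
case: (unliftP i w) => [w'|] Ew; last by rewrite Ew eqxx in wi.
subst; apply: imset_f; rewrite inE; apply/existsP; exists w'.
by rewrite (inj_eq (@lift_inj _ i)) in wz; rewrite wz.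
Qed.

Lemma card_nonisolated_delete : #|nonisolated (delete R i)| <= #|nonisolated R|.
Proof.
rewrite -(card_imset _ (@lift_inj _ i)); apply: subset_leq_card.
apply/subsetP => z /imsetP[x]; rewrite inE => /existsP[y /andP[yx Rxy]] ->.
rewrite inE; apply/existsP; exists (lift i y).
by rewrite (inj_eq (@lift_inj _ i)) yx.
Qed.

Lemma card_nonisolated_delete_isolated :
  i \notin nonisolated R -> #|nonisolated (delete R i)| = #|nonisolated R|.
Proof.
move=> iso; apply/eqP; rewrite eqn_leq card_nonisolated_delete /=.
apply: leq_trans (leq_imset_card (lift i) _); apply: subset_leq_card.
apply/subsetP => z; rewrite inE => /existsP[w /andP[wz Rzw]].
have zw : z != w by rewrite eq_sym.
have wN : w \in nonisolated R.
  by rewrite inE; apply/existsP; exists z; rewrite zw /comparable orbC.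
have zN : z \in nonisolated R by rewrite inE; apply/existsP; exists w; rewrite wz.
have zi : z != i by apply: contraNneq iso => <-.
have wi : w != i by apply: contraNneq iso => <-.
exact: lift_mem_nonisolated zi wi wz Rzw.
Qed.

(* Deleting one of t >= 2 non-isolated maximal elements leaves at least t
   non-isolated elements: the other t - 1 maximal ones, and an element below
   another maximal one, which is not maximal itself. *)
Lemma card_nonisolated_delete_maximal :
  i \in nonisolated_maximal R -> 1 < #|nonisolated_maximal R| ->
  #|nonisolated_maximal R| <= #|nonisolated (delete R i)|.
Proof.
set M := nonisolated_maximal R => iM M_gt1; move: (iM); rewrite inE => /andP[_ max_i].
have below_max x z : x \in M -> z != x -> comparable R x z -> R z x.
  rewrite inE => /andP[_ max_x] zx /orP[Rxz|] //.
  by rewrite (maximalP max_x Rxz) eqxx in zx.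
have [j0 j0M j0i] : exists2 j0, j0 \in M & j0 != i.
  have : 0 < #|M :\ i| by rewrite (cardsD1 i M) iM in M_gt1.
  by rewrite card_gt0 => /set0Pn[j0]; rewrite in_setD1 => /andP[? ?]; exists j0.
have [y yj0 Ryj0] : exists2 y, y != j0 & R y j0.
  move: (j0M); rewrite !inE => /andP[/existsP[y /andP[yj0 Hy]] _].
  by exists y => //; apply: below_max.
have not_below_i x : x != i -> ~~ R i x.
  by move=> xi; apply: contra xi => /(maximalP max_i) ->.
have yi : y != i by apply: contraNneq (not_below_i _ j0i) => <-.
have yM : y \notin M.
  apply: contraNN yj0; rewrite inE => /andP[_ max_y].
  by rewrite (maximalP max_y Ryj0).
have -> : #|M| = #|y |: (M :\ i)|.
  by rewrite cardsU1 (cardsD1 i M) iM in_setD1 yi /= yM.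
apply: leq_trans (leq_imset_card (lift i) _); apply: subset_leq_card.
apply/subsetP => z; rewrite in_setU1 in_setD1 => /orP[/eqP -> | /andP[zi zM]].
  by apply: lift_mem_nonisolated yi j0i _ _; rewrite 1?eq_sym // /comparable Ryj0.
move: (zM); rewrite !inE => /andP[/existsP[w /andP[wz Hw]] _].
have Rwz : R w z by apply: below_max.
have wi : w != i by apply: contraNneq (not_below_i _ zi) => <-.
by apply: lift_mem_nonisolated zi wi wz _; rewrite /comparable Rwz orbT.
Qed.

End DeleteNonisolated.

Section BoundStep.
Variables (m : nat) (R : rel 'I_m.+1).
Hypothesis bound_delete :
  forall i, ext (delete R i) * maxn #|nonisolated (delete R i)| 1 <= m`!.

Let N := nonisolated R.

Lemma bound_isolated_part :
  (\sum_(i | i \notin N) is_maximal R i * ext (delete R i)) * #|N| <= (m.+1 - #|N|) * m`!.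
Proof.
have card_isolated : #|~: N| = m.+1 - #|N|.
  by apply: (canRL (addKn #|N|)); rewrite cardsC card_ord.
rewrite -card_isolated -sum_nat_const big_distrl (eq_bigl _ _ (fun i => in_setC i N)) /=.
apply: leq_sum => i iso.
have max_le : is_maximal R i * ext (delete R i) <= ext (delete R i).
  by case: (is_maximal R i); rewrite ?mul1n ?mul0n.
apply: leq_trans (leq_mul max_le (leqnn _)) (leq_trans _ (bound_delete i)).
by rewrite leq_mul2l card_nonisolated_delete_isolated // leq_maxl orbT.
Qed.

Lemma bound_nonisolated_part :
  \sum_(i in N) is_maximal R i * ext (delete R i) <= m`!.
Proof.
set M := nonisolated_maximal R.
have -> : \sum_(i in N) is_maximal R i * ext (delete R i) = \sum_(i in M) ext (delete R i).
  rewrite big_mkcond [RHS]big_mkcond; apply: eq_bigr => i _.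
  by rewrite in_nonisolated_maximal -/N; case: (i \in N); case: (is_maximal R i); rewrite ?mul1n.
have [M0 | M_gt0] := posnP #|M|.
  by rewrite big1 // => i iM; rewrite (cardsD1 i M) iM in M0.
rewrite -(leq_pmul2r M_gt0) big_distrl -[X in _ <= X]mulnC -sum_nat_const /=.
apply: leq_sum => i iM; apply: leq_trans (bound_delete i); rewrite leq_mul2l.
case: (leqP #|M| 1) => [M_le1 | M_gt1]; first by rewrite (leq_trans M_le1) ?leq_maxr ?orbT.
by rewrite (leq_trans (card_nonisolated_delete_maximal iM M_gt1)) ?leq_maxl ?orbT.
Qed.

Lemma bound_step : ext R * maxn #|N| 1 <= m.+1`!.
Proof.
have [N0 | N_gt0] := posnP #|N|; first by rewrite N0 muln1 ext_le_fact.
have N_le : #|N| <= m.+1 by have := max_card N; rewrite card_ord.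
rewrite (maxn_idPl N_gt0) ext_delete_maximal (bigID (mem N)) /= mulnDl.
apply: leq_trans (leq_add (leq_mul bound_nonisolated_part (leqnn #|N|)) bound_isolated_part) _.
by rewrite factS mulnC -mulnDl subnKC.
Qed.

End BoundStep.

Lemma ext_bound n (R : rel 'I_n) : ext R * maxn #|nonisolated R| 1 <= n`!.
Proof.
elim: n R => [|m IH] R; last by apply: bound_step => i; apply: IH.
by have := max_card (nonisolated R); rewrite card_ord leqn0 => /eqP ->; rewrite muln1 ext_le_fact.
Qed.

Lemma few_nonisolated n (R : rel 'I_n) k :
  n`! < ext R * k.+1 -> #|nonisolated R| <= k.
Proof.
move=> big_ext; rewrite leqNgt; apply: contraTN big_ext => many.
rewrite -leqNgt (leq_trans _ (ext_bound R)) // leq_mul2l.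
by rewrite (leq_trans many) ?leq_maxl ?orbT.
Qed.

Lemma delete_isolated_points r n (P : rel 'I_n) :
  r <= n -> is_poset P -> #|nonisolated P| <= r ->
  exists2 l, LE r l & ext P * r`! = n`! * l.
Proof.
elim: n P => [|n IH] P r_le posP few.
  by move: r_le; rewrite leqn0 => /eqP r0; subst r; exists (ext P); [exists P | rewrite mulnC].
have [r_eq | r_lt] := eqVneq r n.+1.
  by subst r; exists (ext P); [exists P | rewrite mulnC].
have [i iso] : exists i, i \notin nonisolated P.
  have : 0 < #|~: nonisolated P|.
    rewrite -(ltn_add2l #|nonisolated P|) addn0 cardsC card_ord.
    by apply: leq_ltn_trans few _; rewrite ltn_neqAle r_lt r_le.
  by rewrite card_gt0 => /set0Pn[i]; rewrite in_setC; exists i.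
have r_le_n : r <= n by rewrite -ltnS ltn_neqAle r_lt.
have few_del : #|nonisolated (delete P i)| <= r by rewrite card_nonisolated_delete_isolated.
have [l LEl ext_del] := IH _ r_le_n (delete_poset i posP) few_del.
by exists l; rewrite // (ext_delete_isolated iso) -mulnA ext_del factS mulnA.
Qed.

Definition add_isolated m (R : rel 'I_m) : rel 'I_m.+1 := fun x y =>
  if (unlift ord_max x, unlift ord_max y) is (Some a, Some b) then R a b else x == y.

Section AddIsolated.
Variables (m : nat) (R : rel 'I_m).

Lemma add_isolated_lift a b :
  add_isolated R (lift ord_max a) (lift ord_max b) = R a b.
Proof. by rewrite /add_isolated !liftK. Qed.

Lemma add_isolated_maxl y : add_isolated R ord_max y = (y == ord_max).
Proof. by rewrite /add_isolated unlift_none eq_sym. Qed.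

Lemma add_isolated_maxr x : add_isolated R x ord_max = (x == ord_max).
Proof. by rewrite /add_isolated unlift_none; case: (unlift _ x). Qed.

Lemma lift_max_eqF (a : 'I_m) : (lift ord_max a == ord_max) = false.
Proof. by apply/negbTE; rewrite eq_sym neq_lift. Qed.

Lemma add_isolated_poset : is_poset R -> is_poset (add_isolated R).
Proof.
move=> [Rrefl [Ranti Rtrans]]; split; [|split].
- by move=> x; case: (unliftP ord_max x) => [a|] ->; rewrite ?add_isolated_lift ?add_isolated_maxl.
- move=> x y; case: (unliftP ord_max x) => [a|] ->; case: (unliftP ord_max y) => [b|] ->;
    rewrite ?add_isolated_lift ?add_isolated_maxl ?add_isolated_maxr ?lift_max_eqF //.
  by move/Ranti ->.
- move=> x0 x1 x2; case: (unliftP ord_max x0) => [a|] ->; case: (unliftP ord_max x1) => [b|] ->;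
    case: (unliftP ord_max x2) => [c|] ->;
    rewrite ?add_isolated_lift ?add_isolated_maxl ?add_isolated_maxr ?lift_max_eqF //.
  exact: Rtrans.
Qed.

Lemma ext_add_isolated : ext (add_isolated R) = m.+1 * ext R.
Proof.
have iso : ord_max \notin nonisolated (add_isolated R).
  rewrite inE negb_exists; apply/forallP => y.
  by rewrite /comparable add_isolated_maxl add_isolated_maxr orbb andNb.
rewrite (ext_delete_isolated iso); congr (_ * _).
by apply: ext_eq => x y; rewrite /delete add_isolated_lift.
Qed.

End AddIsolated.

Lemma LE_add_isolated m l : LE m l -> LE m.+1 (m.+1 * l).
Proof.
case=> R [posR <-]; exists (add_isolated R).
by split; [apply: add_isolated_poset | apply: ext_add_isolated].
Qed.

Lemma LE_pad r n l : r <= n -> LE r l -> exists2 l', LE n l' & l' * r`! = n`! * l.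
Proof.
move=> r_le LEl; elim: n r_le => [|n IH]; rewrite leq_eqVlt => /orP[/eqP <- | r_lt].
- by exists l; rewrite // mulnC.
- by [].
- by exists l; rewrite // mulnC.
have [l' LEl' El'] := IH r_lt.
exists (n.+1 * l'); first exact: LE_add_isolated.
by rewrite -mulnA El' factS mulnA.
Qed.

Theorem theorem6p3 (n r : nat) (hr1 : 1 <= r) (hrn : r < n) (m : nat) :
  (LE n m /\ n`! < m * r.+1 /\ m <= n`!) <->
  (exists l : nat, [/\ LE r l, r`! < l * r.+1, l <= r`! & m = (n`! %/ r`!) * l]).
Proof.
have r_le : r <= n := ltnW hrn.
set c := n`! %/ r`!.
have fact_n : n`! = c * r`! by rewrite divnK // (fact_split r_le) dvdn_mulr.
have c_gt0 : 0 < c by move: (fact_gt0 n); rewrite fact_n muln_gt0 => /andP[].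
have scaled k l : k = c * l -> (n`! < k * r.+1) = (r`! < l * r.+1) /\ (k <= n`!) = (l <= r`!).
  by move=> ->; rewrite fact_n -mulnA ltn_pmul2l // leq_pmul2l // mulnC.
split => [[[P [posP extP]] [lower upper]] | [l [LEl lower upper ->]]].
  have few : #|nonisolated P| <= r by apply: few_nonisolated; rewrite extP.
  have [l LEl El] := delete_isolated_points r_le posP few.
  have Em : m = c * l by apply/eqP; rewrite -(eqn_pmul2r (fact_gt0 r)) -extP El fact_n mulnAC.
  have [Elower Eupper] := scaled m l Em.
  by exists l; split; rewrite -?Elower -?Eupper.
have [m' LEm' Em'] := LE_pad r_le LEl.
have Em'c : m' = c * l by apply/eqP; rewrite -(eqn_pmul2r (fact_gt0 r)) Em' fact_n mulnAC.
have [Elower Eupper] := scaled (c * l) l erefl.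
by rewrite Elower Eupper -Em'c.
Qed.
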